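(* Let $F_2=\langle a,b\rangle$ be the free group of rank two and let $\rho:F_2\to PSL(2,\mathbb{C})$ be a homomorphism with $\rho(a)$ parabolic. Then there is a homomorphism $\tilde\rho:F_2\to PSL(2,\mathbb{C})$ with $\tilde\rho(a)=\rho(a)$, $\tilde\rho(b)$ elliptic of order two, and \[\operatorname{tr}[\rho(a),\rho(b)]-2=\operatorname{tr}[\tilde\rho(a),\tilde\rho(b)]-2 .\] If $\rho(F_2)$ is discrete, then so is $\tilde\rho(F_2)$.
   Context: $[x,y]=xyx^{-1}y^{-1}$; the trace of a commutator is well defined in $PSL(2,\mathbb{C})$. *)

From HB Require Import structures.
From mathcomp Require Import all_boot all_order all_algebra.
From mathcomp Require Import reals.
From mathcomp Require Import complex.
Set Implicit Arguments. Unset Strict Implicit. Unset Printing Implicit Defensive.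
Import Order.TTheory GRing.Theory Num.Theory.
Local Open Scope ring_scope.

(* We work with C := R[i] for an arbitrary R : realType (a copy of the reals),
   and represent PSL(2,C) elements by lifts in SL(2,C) (2x2 matrices of det 1);
   a matrix M represents the class {M, -M}. *)

Section Defs.
Variable R : realType.
Local Notation C := (R[i]).

Definition SL2 (M : 'M[C]_2) : Prop := \det M = 1.

Definition psl_trivial (M : 'M[C]_2) : Prop := M = 1 \/ M = - 1.

Definition parabolic (M : 'M[C]_2) : Prop :=
  (\tr M = 2 \/ \tr M = - 2) /\ ~ psl_trivial M.

Definition elliptic (M : 'M[C]_2) : Prop :=
  \tr M \is Num.real /\ `|\tr M| < 2.

Definition order_two (M : 'M[C]_2) : Prop :=
  psl_trivial (M ^+ 2) /\ ~ psl_trivial M.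

Definition comm (X Y : 'M[C]_2) : 'M[C]_2 := X * Y * X^-1 * Y^-1.

Inductive gen (A B : 'M[C]_2) : 'M[C]_2 -> Prop :=
| gen1 : gen A B 1
| genA  M : gen A B M -> gen A B (A * M)
| genAV M : gen A B M -> gen A B (A^-1 * M)
| genB  M : gen A B M -> gen A B (B * M)
| genBV M : gen A B M -> gen A B (B^-1 * M).

(* The image in PSL(2,C) of <A,B> is discrete: the identity is isolated, i.e.
   some neighbourhood of {1,-1} (entrywise distance < eps) contains no element
   of <A,B> other than +-1. *)
Definition psl_discrete (A B : 'M[C]_2) : Prop :=
  exists eps : C, 0 < eps /\
    forall M, gen A B M ->
      ((forall i j, `|M i j - (1 : 'M[C]_2) i j| < eps) \/
       (forall i j, `|M i j + (1 : 'M[C]_2) i j| < eps)) ->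
      psl_trivial M.
End Defs.

From HB Require Import structures.
From mathcomp Require Import all_boot all_order all_algebra.
From mathcomp Require Import reals.
From mathcomp Require Import complex ring.
Set Implicit Arguments. Unset Strict Implicit. Unset Printing Implicit Defensive.
Import Order.TTheory GRing.Theory Num.Theory.
Local Open Scope ring_scope.

(* Write A = s + N with s = 1 or -1 and N a nonzero nilpotent.  Fricke's identity
   gives tr[A, X] - 2 = tr(N X)^2 for every X in SL(2,C), so it suffices to find a
   half-turn X (trace 0, hence X^2 = -1, elliptic of order two) with
   tr(N X) = tr(N B) and X A X^-1 in <A, B>.  If t = tr(N B) is nonzero,
   X = B (1 - (tr B / t) N) works, and X A X^-1 = B A B^-1 because the correction
   commutes with A.  If t = 0, a multiple of N Y - Y N with tr(N Y) <> 0
   anticommutes with N, so X A X^-1 = A^-1.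
   In both cases <A, X> = +-<A, H> u +-<A, H> X with H = X A X^-1 in <A, B>.  An
   element of the second coset close to +-1 squares into +-<A, H> close to 1, so
   its square is +-1; having nonzero trace, it is then +-1 itself. *)

Lemma invr_sqrN1 (T : unitRingType) (x : T) : x * x = -1 -> x^-1 = - x.
Proof.
move=> xx; have ux : x \is a GRing.unit.
  by apply/unitrP; exists (- x); rewrite mulrN mulNr xx opprK.
by rewrite -[RHS](mulKr ux) mulrN xx opprK mulr1.
Qed.

Lemma mulr_intertwineV (T : unitRingType) (p x y : T) :
  x \is a GRing.unit -> y \is a GRing.unit -> p * x = y * p -> p * x^-1 = y^-1 * p.
Proof. by move=> ux uy pxy; rewrite -[RHS](mulrK ux) -(mulrA _ p) pxy (mulKr uy). Qed.

Lemma mxtrace_mulrC (T : comNzRingType) n (X Y : 'M[T]_n.+1) : \tr (X * Y) = \tr (Y * X).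
Proof. exact: mxtrace_mulC. Qed.

Section TwoByTwo.
Variable R : realType.
Local Notation C := R[i].
Implicit Types M N X Y : 'M[C]_2.

Lemma ord2P (i : 'I_2) : i = 0 \/ i = 1.
Proof. by case: i => [[|[|//]] Hi]; [left|right]; apply/val_inj. Qed.

Lemma ord2_0E : ord0 = 0 :> 'I_2. Proof. exact/val_inj. Qed.
Lemma ord2_1E : lift ord0 ord0 = 1 :> 'I_2. Proof. exact/val_inj. Qed.

Lemma mx2_ext M N :
  M 0 0 = N 0 0 -> M 0 1 = N 0 1 -> M 1 0 = N 1 0 -> M 1 1 = N 1 1 -> M = N.
Proof.
move=> e00 e01 e10 e11; apply/matrixP=> i j.
by case: (ord2P i) => ->; case: (ord2P j) => ->.
Qed.

Lemma mxtrace_mx2 M : \tr M = M 0 0 + M 1 1.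
Proof. by rewrite /mxtrace !big_ord_recl big_ord0 addr0 /= ord2_1E ord2_0E. Qed.

Lemma det_mx2 M : \det M = M 0 0 * M 1 1 - M 0 1 * M 1 0.
Proof.
rewrite (expand_det_row _ ord0) !big_ord_recl big_ord0 /cofactor !det_mx11 !mxE.
rewrite !(ord1 (0 : 'I_1)) ord2_1E (_ : lift 1 ord0 = 0 :> 'I_2); last exact/val_inj.
by rewrite ord2_0E /bump /= expr0 expr1 addr0 mul1r mulN1r mulrN.
Qed.

Lemma mulmx2E M N i j : (M * N) i j = M i 0 * N 0 j + M i 1 * N 1 j.
Proof. by rewrite !mxE !big_ord_recl big_ord0 addr0 /= ord2_1E ord2_0E. Qed.

Lemma Cayley_Hamilton_mx2 M : M * M = \tr M *: M - (\det M)%:M.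
Proof.
by apply: mx2_ext; rewrite !mulmx2E mxtrace_mx2 det_mx2 !mxE /= ?mulr1n ?mulr0n; ring.
Qed.

Lemma sqr_mx2_eq0 N : \tr N = 0 -> \det N = 0 -> N * N = 0.
Proof. by move=> tN dN; rewrite Cayley_Hamilton_mx2 tN dN scale0r raddf0 subr0. Qed.

Lemma det1D_mx2 M : \det (1 + M) = 1 + \tr M + \det M.
Proof. by rewrite !det_mx2 mxtrace_mx2 !mxE /= ?mulr1n ?mulr0n; ring. Qed.

Lemma SL2_unit M : SL2 M -> M \is a GRing.unit.
Proof. by move=> dM; rewrite unitmxE dM unitr1. Qed.

Lemma SL2_inv M : SL2 M -> M^-1 = (\tr M)%:M - M.
Proof.
move=> dM; have MM' : M * ((\tr M)%:M - M) = 1.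
  by rewrite mulrBr Cayley_Hamilton_mx2 dM -scalemx1 idmxE mulr_algr opprB subrKC.
by rewrite -[RHS](mulKr (SL2_unit dM)) MM' mulr1.
Qed.

Lemma mxtrace_comm_SL2 X Y : SL2 X -> SL2 Y ->
  \tr (comm X Y) =
  \tr X ^+ 2 + \tr Y ^+ 2 + \tr (X * Y) ^+ 2 - \tr X * \tr Y * \tr (X * Y) - 2.
Proof.
move=> dX dY; rewrite /comm !SL2_inv //.
(* With the adjugates [tr X - X] in place of the inverses, this is a polynomial identity. *)
transitivity (\tr X ^+ 2 * \det Y + \tr Y ^+ 2 * \det X + \tr (X * Y) ^+ 2
              - \tr X * \tr Y * \tr (X * Y) - 2 * \det X * \det Y); last first.
  by rewrite dX dY !mulr1.
by rewrite !mxtrace_mx2 !det_mx2 !mulmx2E !mxE /= ?mulr1n ?mulr0n; ring.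
Qed.

Lemma mxtrace_comm_parabolic A B (s : C) : SL2 A -> SL2 B ->
  s ^+ 2 = 1 -> \tr A = s *+ 2 -> \tr (comm A B) - 2 = \tr ((A - s%:A) * B) ^+ 2.
Proof.
move=> dA dB s2 trA.
rewrite mxtrace_comm_SL2 // mulrBl mulr_algl raddfB /= mxtraceZ trA.
set b := \tr B; set p := \tr (A * B).
have -> : (s *+ 2) ^+ 2 + b ^+ 2 + p ^+ 2 - s *+ 2 * b * p - 2 - 2
          = (p - s * b) ^+ 2 + (s ^+ 2 - 1) * (4 - b ^+ 2) by ring.
by rewrite s2 subrr mul0r addr0.
Qed.

Lemma SL2_traceless_sqr M : SL2 M -> \tr M = 0 -> M * M = -1.
Proof. by move=> dM tM; rewrite Cayley_Hamilton_mx2 dM tM scale0r sub0r. Qed.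

Lemma mxtrace1_mx2 : \tr (1 : 'M[C]_2) = 2.
Proof. exact: mxtrace1. Qed.

Lemma SL2_traceless_half_turn M : SL2 M -> \tr M = 0 -> elliptic M /\ order_two M.
Proof.
move=> dM tM; split; first by rewrite /elliptic tM real0 normr0 ltr0n.
split; first by right; rewrite expr2 SL2_traceless_sqr.
by case=> eM; move: tM; rewrite eM ?raddfN /= mxtrace1_mx2 => /eqP; rewrite ?oppr_eq0 pnatr_eq0.
Qed.

Lemma SL2_sqr_trivial M : SL2 M -> \tr M != 0 -> psl_trivial (M * M) -> psl_trivial M.
Proof.
move=> dM tM0 MM; have tM : \tr M *: M = M * M + 1 by rewrite Cayley_Hamilton_mx2 dM subrK.
case: MM => MM; rewrite MM in tM; last first.
  move/eqP: tM; rewrite addNr scaler_eq0 (negPf tM0) /= => /eqP M0.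
  by move: dM; rewrite /SL2 M0 det0 => /eqP; rewrite eq_sym oner_eq0.
have : (\tr M - 2) * (\tr M + 2) = 0.
  have := congr1 mxtrace tM; rewrite mxtraceZ raddfD /= mxtrace1_mx2 => t2.
  by rewrite -subr_sqr expr2 t2; ring.
have two_neq0 : (2 : C) != 0 by rewrite pnatr_eq0.
move/eqP; rewrite mulf_eq0 subr_eq0 addr_eq0 => /orP[]/eqP t2; rewrite t2 in tM.
- by left; apply: (scalerI two_neq0); rewrite tM scaler_nat mulr2n.
- right; apply: (scalerI (_ : - 2 != 0)); first by rewrite oppr_eq0.
  by rewrite tM scalerN scaleNr opprK scaler_nat mulr2n.
Qed.

Definition near_pm1 M (e : C) : Prop :=
  (forall i j, `|M i j - (1 : 'M[C]_2) i j| < e) \/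
  (forall i j, `|M i j + (1 : 'M[C]_2) i j| < e).

Lemma near_pm1N M e : near_pm1 (- M) e -> near_pm1 M e.
Proof.
case=> h; [right | left] => i j; have := h i j; rewrite mxE.
  by rewrite -opprD normrN.
by rewrite addrC -opprB normrN.
Qed.

Lemma near_pm1W M e e' : e <= e' -> near_pm1 M e -> near_pm1 M e'.
Proof. by move=> ee' [h|h]; [left | right] => i j; apply: lt_le_trans (h i j) ee'. Qed.

Lemma near_pm1_sqr X d : d <= 1 -> near_pm1 X d -> near_pm1 (X * X) (d *+ 4).
Proof.
move=> d1 nX; suff near1_sqr Y : (forall i j, `|Y i j - (1 : 'M[C]_2) i j| < d) ->
    near_pm1 (Y * Y) (d *+ 4).
  case: nX => hX; first exact: near1_sqr.
  by rewrite -mulrNN; apply: near1_sqr => i j; rewrite mxE -opprD normrN.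
move=> hY; left=> i j; set E := Y - 1.
have hE k l : `|E k l| < d by move: (hY k l); rewrite !mxE.
have d0 : 0 <= d by apply: le_trans (normr_ge0 _) (ltW (hE 0 0)).
have YY : Y * Y - 1 = E + E + E * E.
  by rewrite /E mulrBl !mulrBr mul1r !mulr1 [RHS]addrC addrA subrK addrA subrK.
rewrite (_ : _ - _ = (E + E + E * E) i j); last by rewrite -YY !mxE.
have hEE k l k' l' : `|E k l * E k' l'| <= d.
  rewrite normrM; apply: le_trans (_ : d * d <= d); last by rewrite ler_piMl.
  by apply: ler_pM => //; apply: ltW.
rewrite mxE mulmx2E mxE (_ : d *+ 4 = d + d + (d + d)); last by rewrite !mulrS mulr0n addr0 !addrA.
apply: le_lt_trans (ler_normD _ _) _; apply: ltr_leD.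
  by apply: le_lt_trans (ler_normD _ _) _; apply: ltrD.
by apply: le_trans (ler_normD _ _) _; apply: lerD.
Qed.

Lemma near_pm1_mxtrace_neq0 X d : d <= 1 -> near_pm1 X d -> \tr X != 0.
Proof.
move=> d1 nX; suff near1_tr Y : (forall i j, `|Y i j - (1 : 'M[C]_2) i j| < d) -> \tr Y != 0.
  case: nX => hX; first exact: near1_tr.
  by rewrite -oppr_eq0 -raddfN /=; apply: near1_tr => i j; rewrite mxE -opprD normrN.
move=> hY; rewrite mxtrace_mx2; apply/eqP=> tY.
have := hY 0 0; have := hY 1 1; rewrite !mxE /= !mulr1n !(distrC (Y _ _)) => h11 h00.
have : `|(1 - Y 0 0) + (1 - Y 1 1)| < 1 + 1.
  by apply: le_lt_trans (ler_normD _ _) _; apply: ltrD; apply: lt_le_trans d1.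
by rewrite addrACA -opprD tY subr0 -mulr2n normr_nat ltxx.
Qed.

Lemma exists_small_pos (e : C) : 0 < e -> exists2 d : C, 0 < d & d <= 1 /\ d *+ 4 <= e.
Proof.
move=> e0; have e4 : 0 < e + 4 by rewrite addr_gt0 ?ltr0n.
exists (e / (e + 4)); first by rewrite divr_gt0.
split; first by rewrite ler_pdivrMr // mul1r lerDl ler0n.
by rewrite -[_ *+ 4]mulr_natr mulrAC ler_pdivrMr // ler_pM2l // lerDr ltW.
Qed.

Lemma psl_trivialN M : psl_trivial M -> psl_trivial (- M).
Proof. by case=> ->; [right | left; rewrite opprK]. Qed.

Section Generated.
Variables A B : 'M[C]_2.

Lemma gen_mul M N : gen A B M -> gen A B N -> gen A B (M * N).
Proof.
move=> gM gN; elim: gM => [|M' _ IH|M' _ IH|M' _ IH|M' _ IH]; rewrite ?mul1r // -mulrA.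
- exact: genA.
- exact: genAV.
- exact: genB.
- exact: genBV.
Qed.

Lemma gen_A : gen A B A. Proof. by have := genA (gen1 A B); rewrite mulr1. Qed.
Lemma gen_AV : gen A B A^-1. Proof. by have := genAV (gen1 A B); rewrite mulr1. Qed.
Lemma gen_B : gen A B B. Proof. by have := genB (gen1 A B); rewrite mulr1. Qed.
Lemma gen_BV : gen A B B^-1. Proof. by have := genBV (gen1 A B); rewrite mulr1. Qed.

Hypotheses (dA : SL2 A) (dB : SL2 B).

Lemma gen_SL2 M : gen A B M -> SL2 M.
Proof.
rewrite /SL2; elim=> [|M' _ dM|M' _ dM|M' _ dM|M' _ dM]; first exact: det1.
all: by rewrite detM ?detV dM ?dA ?dB ?invr1 mulr1.
Qed.

Lemma gen_inv M : gen A B M -> gen A B M^-1.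
Proof.
have [uA uB] := (SL2_unit dA, SL2_unit dB).
elim=> [|M' gM' IH|M' gM' IH|M' gM' IH|M' gM' IH]; first by rewrite invr1; exact: gen1.
all: rewrite invrM ?unitrV ?(SL2_unit (gen_SL2 gM')) // ?invrK; apply: gen_mul IH _.
- exact: gen_AV.
- exact: gen_A.
- exact: gen_BV.
- exact: gen_B.
Qed.

Lemma gen_subset X Y M : gen A B X -> gen A B Y -> gen X Y M -> gen A B M.
Proof.
move=> gX gY; elim=> [|W _ IH|W _ IH|W _ IH|W _ IH]; first exact: gen1.
all: by apply: gen_mul _ IH => //; apply: gen_inv.
Qed.

End Generated.

Section HalfTurn.
Variables A B phi H : 'M[C]_2.
Hypotheses (dA : SL2 A) (dB : SL2 B) (dphi : SL2 phi).
Hypotheses (phi2 : phi * phi = -1) (phiA : phi * A = H * phi) (gH : gen A B H).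

Lemma half_turn_conjH : phi * H = A * phi.
Proof.
rewrite -[LHS](mulrK (SL2_unit dphi)) -(mulrA phi) -phiA mulrA phi2.
by rewrite invr_sqrN1 // mulN1r mulrNN.
Qed.

Lemma gen_half_turn_conj W : gen A H W -> exists2 W', gen A H W' & phi * W = W' * phi.
Proof.
have [uA uH] := (SL2_unit dA, SL2_unit (gen_SL2 dA dB gH)).
elim=> [|M _ [W' gW' eW]|M _ [W' gW' eW]|M _ [W' gW' eW]|M _ [W' gW' eW]].
- by exists 1; [exact: gen1 | rewrite mulr1 mul1r].
- by exists (H * W'); [exact: genB | rewrite mulrA phiA -mulrA eW mulrA].
- exists (H^-1 * W'); first exact: genBV.
  by rewrite mulrA (mulr_intertwineV uA uH phiA) -mulrA eW mulrA.
- by exists (A * W'); [exact: genA | rewrite mulrA half_turn_conjH -mulrA eW mulrA].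
- exists (A^-1 * W'); first exact: genAV.
  by rewrite mulrA (mulr_intertwineV uH uA half_turn_conjH) -mulrA eW mulrA.
Qed.

Lemma gen_half_turn_decomp M : gen A phi M ->
  exists2 W, gen A H W & (M = W \/ M = - W) \/ (M = W * phi \/ M = - (W * phi)).
Proof.
pose P M := exists2 W, gen A H W & (M = W \/ M = - W) \/ (M = W * phi \/ M = - (W * phi)).
have PN M' : P M' -> P (- M').
  by case=> W gW eM; exists W => //; case: eM => -[] ->; rewrite ?opprK; tauto.
have PX X M' : gen A H X -> P M' -> P (X * M').
  move=> gX [W gW eM]; exists (X * W); first exact: gen_mul.
  by case: eM => -[] ->; rewrite ?mulrN ?mulrA; tauto.
have Pphi M' : P M' -> P (phi * M').
  case=> W gW eM; have [W' gW' eW] := gen_half_turn_conj gW; exists W' => //.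
  case: eM => -[] ->; rewrite ?mulrN ?mulrA eW -?mulrA ?phi2 ?mulrN1 ?opprK; tauto.
elim=> [|M' _ IH|M' _ IH|M' _ IH|M' _ IH].
- by exists 1; [exact: gen1 | tauto].
- exact/PX/IH/gen_A.
- exact/PX/IH/gen_AV.
- exact: Pphi.
- by rewrite invr_sqrN1 // mulNr; apply/PN/Pphi.
Qed.

Lemma psl_discrete_half_turn : psl_discrete A B -> psl_discrete A phi.
Proof.
case=> eps [eps0 discAB].
have trivAB W M : gen A B W -> M = W \/ M = - W -> near_pm1 M eps -> psl_trivial M.
  move=> gW [->|->] nM; first exact: discAB.
  exact/psl_trivialN/(discAB _ gW)/near_pm1N.
have [d d0 [d1 d4]] := exists_small_pos eps0.
have de : d <= eps := le_trans (ler_wpMn2l (ltW d0) (isT : (1 <= 4)%N)) d4.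
have gHB W : gen A H W -> gen A B W := gen_subset dA dB (gen_A A B) gH.
exists d; split => // M gM nM.
have [W gW [eM|eM]] := gen_half_turn_decomp gM.
  exact: trivAB (gHB _ gW) eM (near_pm1W de nM).
apply: SL2_sqr_trivial.
- exact: (gen_SL2 dA dphi gM).
- exact: near_pm1_mxtrace_neq0 d1 nM.
have [W' gW' eW] := gen_half_turn_conj gW.
apply: trivAB (gen_mul (gHB _ gW) (gHB _ gW')) _ (near_pm1W d4 (near_pm1_sqr d1 nM)).
by right; case: eM => ->; rewrite ?mulrNN -mulrA (mulrA phi) eW -!mulrA phi2 mulrN1 mulrN.
Qed.

End HalfTurn.

Lemma det_commutator_nil N X : \tr N = 0 -> \det N = 0 ->
  \det (N * X - X * N) = - \tr (N * X) ^+ 2.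
Proof.
rewrite mxtrace_mx2 det_mx2 => /eqP; rewrite addr_eq0 => /eqP tN dN.
rewrite det_mx2 mxtrace_mx2 !(mulmx2E, mxE) tN; rewrite tN in dN.
(* The two sides differ by a multiple of [\det N]. *)
transitivity (- (- N 1 1 * X 0 0 + N 0 1 * X 1 0 + (N 1 0 * X 0 1 + N 1 1 * X 1 1)) ^+ 2
  - (4 * X 0 1 * X 1 0 + (X 0 0 - X 1 1) ^+ 2) * (- N 1 1 * N 1 1 - N 0 1 * N 1 0)); first ring.
by rewrite dN mulr0 subr0.
Qed.

Lemma exists_mxtrace_mul_neq0 N : N != 0 -> exists X, \tr (N * X) != 0.
Proof.
move=> N0; have [i [j Nij]] : exists i j, N i j != 0.
  case/boolP: [exists i, exists j, N i j != 0] => [/existsP[i /existsP[j Nij]]|]; first by exists i, j.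
  rewrite negb_exists => /forallP N0ij; case/eqP: N0; apply/matrixP => i j.
  by move: (N0ij i); rewrite negb_exists => /forallP/(_ j)/negPn/eqP ->; rewrite mxE.
exists (delta_mx j i); move: Nij.
by case: (ord2P i) => ->; case: (ord2P j) => ->;
  rewrite mxtrace_mx2 !mulmx2E !mxE /= ?mulr1 ?mulr0 ?addr0 ?add0r.
Qed.

Lemma exists_anticommuting_half_turn N : N != 0 -> \tr N = 0 -> \det N = 0 ->
  exists phi, [/\ SL2 phi, \tr phi = 0, \tr (N * phi) = 0 & phi * N = - (N * phi)].
Proof.
move=> N0 tN dN; have NN := sqr_mx2_eq0 tN dN.
have [X tNX] := exists_mxtrace_mul_neq0 N0.
set K := N * X - X * N.
have NK : N * K = - (N * X * N) by rewrite /K mulrBr !mulrA NN mul0r sub0r.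
have KN : K * N = N * X * N by rewrite /K mulrBl -!mulrA NN mulr0 subr0.
exists (('i / \tr (N * X)) *: K); split.
- by rewrite /SL2 detZ det_commutator_nil // expr_div_n sqr_i; field.
- by rewrite mxtraceZ raddfB /= mxtrace_mulrC subrr mulr0.
- by rewrite -scalerAr mxtraceZ NK raddfN /= (mxtrace_mulrC (N * X)) mulrA NN mul0r raddf0 oppr0 mulr0.
- by rewrite -scalerAl -scalerAr KN NK scalerN opprK.
Qed.

Lemma exists_traceless_twist B N : SL2 B -> \tr N = 0 -> \det N = 0 -> \tr (N * B) != 0 ->
  exists psi, [/\ SL2 (B * psi), \tr (B * psi) = 0,
                  \tr (N * (B * psi)) = \tr (N * B) & psi * N = N * psi].
Proof.
move=> dB tN dN tNB; have NN := sqr_mx2_eq0 tN dN.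
exists (1 + (- (\tr B / \tr (N * B))) *: N); split.
- by rewrite /SL2 detM dB det1D_mx2 mxtraceZ detZ tN dN !mulr0 !addr0 mulr1.
- by rewrite mulrDr mulr1 -scalerAr raddfD /= mxtraceZ (mxtrace_mulrC B) mulNr divfK // subrr.
- rewrite !mulrDr !mulr1 -!scalerAr raddfD /= mxtraceZ mulrA (mxtrace_mulrC (N * B)) mulrA NN mul0r.
  by rewrite raddf0 mulr0 addr0.
- by rewrite mulrDl mulrDr mul1r mulr1 -scalerAl -scalerAr.
Qed.

Section Parabolic.
Variables (A : 'M[C]_2) (s : C).
Hypotheses (dA : SL2 A) (s2 : s ^+ 2 = 1) (trA : \tr A = s *+ 2).

Lemma parabolic_nil_mxtrace : \tr (A - s%:A) = 0.
Proof. by rewrite raddfB /= mxtraceZ mxtrace1_mx2 trA mulr_natr subrr. Qed.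

Lemma parabolic_nil_det : \det (A - s%:A) = 0.
Proof.
have -> : \det (A - s%:A) = \det A - s * \tr A + s ^+ 2.
  by rewrite !det_mx2 mxtrace_mx2 !mxE /= ?mulr1n ?mulr0n; ring.
by rewrite dA trA; transitivity (1 - s ^+ 2); [ring | rewrite s2 subrr].
Qed.

Lemma parabolic_invE : A^-1 = s%:A - (A - s%:A).
Proof. by rewrite SL2_inv // trA -scalemx1 idmxE opprB addrA -scalerDl -mulr2n. Qed.

Lemma parabolic_nil_neq0 : ~ psl_trivial A -> A - s%:A != 0.
Proof.
move=> ntA; apply/eqP=> N0; apply: ntA; have -> : A = s%:A by apply/eqP; rewrite -subr_eq0 N0.
move/eqP: s2; rewrite sqrf_eq1 => /orP[]/eqP ->.
- by left; rewrite scale1r.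
- by right; rewrite scaleN1r.
Qed.

End Parabolic.

Lemma half_turn_partner A B phi H (s : C) : SL2 A -> SL2 B -> s ^+ 2 = 1 -> \tr A = s *+ 2 ->
  SL2 phi -> \tr phi = 0 -> \tr ((A - s%:A) * phi) = \tr ((A - s%:A) * B) ->
  phi * A = H * phi -> gen A B H ->
  [/\ SL2 phi, elliptic phi, order_two phi,
      \tr (comm A B) - 2 = \tr (comm A phi) - 2 & (psl_discrete A B -> psl_discrete A phi)].
Proof.
move=> dA dB s2 trA dphi trphi tNphi phiA gH.
have [ephi ophi] := SL2_traceless_half_turn dphi trphi.
split => //; first by rewrite (mxtrace_comm_parabolic dA dB s2 trA) (mxtrace_comm_parabolic dA dphi s2 trA) tNphi.
exact: psl_discrete_half_turn dA dB dphi (SL2_traceless_sqr dphi trphi) phiA gH.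
Qed.

End TwoByTwo.

Theorem theorem6 (R : realType) (A B : 'M[R[i]]_2) :
  SL2 A -> SL2 B -> parabolic A ->
  exists B' : 'M[R[i]]_2,
    [/\ SL2 B', elliptic B', order_two B',
        \tr (comm A B) - 2 = \tr (comm A B') - 2
      & psl_discrete A B -> psl_discrete A B'].
Proof.
move=> dA dB pA.
have [s s2 trA] : exists2 s : R[i], s ^+ 2 = 1 & \tr A = s *+ 2.
  by case: pA => -[] ->; [exists 1 | exists (-1)]; rewrite ?sqrrN ?expr1n ?mulNrn.
have tN := parabolic_nil_mxtrace trA.
have dN := parabolic_nil_det dA s2 trA.
have N0 := parabolic_nil_neq0 s2 pA.2.
set N := A - s%:A in tN dN N0 *.
have AN : A = s%:A + N by rewrite /N addrC subrK.
case: (eqVneq (\tr (N * B)) 0) => tNB.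
- have [phi [dphi trphi tNphi phiN]] := exists_anticommuting_half_turn N0 tN dN.
  exists phi; apply: (half_turn_partner dA dB s2 trA dphi trphi _ _ (gen_AV A B)).
    by rewrite -/N tNphi tNB.
  by rewrite (parabolic_invE dA trA) -/N {1}AN mulrDr mulrBl mulr_algl mulr_algr phiN.
- have [psi [dphi trphi tNphi psiN]] := exists_traceless_twist dB tN dN tNB.
  have psiA : psi * A = A * psi by rewrite AN mulrDr mulrDl mulr_algl mulr_algr psiN.
  exists (B * psi); apply: (half_turn_partner (H := B * A * B^-1) dA dB s2 trA dphi trphi tNphi).
    by rewrite -mulrA psiA !mulrA (mulrVK (SL2_unit dB)).
  exact: gen_mul (gen_mul (gen_B A B) (gen_A A B)) (gen_BV A B).
Qed.
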